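(* The manifold $\mathcal M_F$ is locally symmetric (i.e. $\nabla R\equiv0$) if and only if, for each $i$ with $1\le i\le k$ and every $u\in\mathbb R$, either $f_i(u)=0$ or $f_i'(u)=-\tfrac12$.
   Context: Fix an integer $k\ge 1$ and signs $\varepsilon_1,\dots,\varepsilon_k\in\{\pm1\}$. Let $f_1,\dots,f_k:\mathbb R\to\mathbb R$ be smooth, $F=(f_1,\dots,f_k)$. On $\mathbb R^{3k+2}$ with coordinates $(u_0,\dots,u_k,v_0,\dots,v_k,s_1,\dots,s_k)$ let $g_F$ be the symmetric metric whose only nonzero components on coordinate vector fields are (up to symmetry), for $1\le i\le k$ and $0\le i',j\le k$: $g_F(\partial_{u_0},\partial_{u_i})=2f_i(u_i)s_i$, $g_F(\partial_{u_i},\partial_{u_i})=-2u_0s_i$, $g_F(\partial_{u_{i'}},\partial_{v_j})=\delta_{i'j}$, $g_F(\partial_{s_i},\partial_{s_i})=\varepsilon_i$; $\mathcal M_F=(\mathbb R^{3k+2},g_F)$, with Levi-Civita connection $\nabla$ and curvature tensor $R(X,Y,Z,W)=g_F(\nabla_X\nabla_YZ-\nabla_Y\nabla_XZ-\nabla_{[X,Y]}Z,W)$. *)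

From Stdlib Require Import Reals.
From Coquelicot Require Import Coquelicot.
From mathcomp Require Import all_boot all_algebra.
From mathcomp Require Import Rstruct.

Set Implicit Arguments.
Unset Strict Implicit.
Unset Printing Implicit Defensive.
Import GRing.Theory.
Local Open Scope ring_scope.

(* Dimension 3k+2, written as a successor so that ordinals 'I_(dim k) are
   nonempty syntactically. *)
Definition dim (k : nat) : nat := (3 * k + 1).+1.

(* Coordinate layout (0-based index p):
     u_a  (0 <= a <= k)  -> index a
     v_a  (0 <= a <= k)  -> index k+1+a
     s_i  (1 <= i <= k)  -> index 2k+1+i                                  *)
Definition pt (k : nat) := 'I_(dim k) -> R.

Definition uidx (k a : nat) : nat := a.
Definition vidx (k a : nat) : nat := (k + 1 + a)%N.
Definition sidx (k i : nat) : nat := (2 * k + 1 + i)%N.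

Definition coord (k : nat) (x : pt k) (p : nat) : R := x (inord p).

Definition gnat (k : nat) (eps : nat -> R) (f : nat -> R -> R)
    (x : pt k) (p q : nat) : R :=
  if (p == 0)%N && (1 <= q <= k)%N then
    2 * f q (coord x (uidx k q)) * coord x (sidx k q)
  else if (q == 0)%N && (1 <= p <= k)%N then
    2 * f p (coord x (uidx k p)) * coord x (sidx k p)
  else if (p == q) && (1 <= p <= k)%N then
    - (2 * coord x (uidx k 0) * coord x (sidx k p))
  else if (p <= k)%N && (q == vidx k p) then 1
  else if (q <= k)%N && (p == vidx k q) then 1
  else if [exists i : 'I_k.+1, (1 <= i)%N && (p == sidx k i) && (q == sidx k i)]
  then eps (p - (2 * k + 1))%N
  else 0.

Definition gF (k : nat) (eps : nat -> R) (f : nat -> R -> R)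
    (x : pt k) (p q : 'I_(dim k)) : R := gnat eps f x p q.

Definition gmx k eps f (x : pt k) : 'M[R]_(dim k) :=
  \matrix_(p, q) gF eps f x p q.
Definition ginv k eps f (x : pt k) : 'M[R]_(dim k) := invmx (gmx eps f x).

Definition pd k (a : 'I_(dim k)) (h : pt k -> R) (x : pt k) : R :=
  Derive (fun t => h (fun j => if j == a then t else x j)) (x a).

Definition chr1 k eps f (x : pt k) (i j l : 'I_(dim k)) : R :=
  (pd i (fun y => gF eps f y j l) x + pd j (fun y => gF eps f y i l) x
   - pd l (fun y => gF eps f y i j) x) / 2.

Definition Gam k eps f (x : pt k) (m i j : 'I_(dim k)) : R :=
  \sum_(l < dim k) ginv eps f x m l * chr1 eps f x i j l.

(* R(d_i, d_j, d_c, d_l) = g(nabla_i nabla_j d_c - nabla_j nabla_i d_c, d_l)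
   (coordinate fields commute) *)
Definition Riem k eps f (x : pt k) (i j c l : 'I_(dim k)) : R :=
  \sum_(m < dim k) gF eps f x m l *
    (pd i (fun y => Gam eps f y m j c) x - pd j (fun y => Gam eps f y m i c) x
     + \sum_(p < dim k) (Gam eps f x p j c * Gam eps f x m i p
                         - Gam eps f x p i c * Gam eps f x m j p)).

Definition nablaR k eps f (x : pt k) (a i j c l : 'I_(dim k)) : R :=
  pd a (fun y => Riem eps f y i j c l) x
  - \sum_(p < dim k) (Gam eps f x p a i * Riem eps f x p j c l
                      + Gam eps f x p a j * Riem eps f x i p c l
                      + Gam eps f x p a c * Riem eps f x i j p l
                      + Gam eps f x p a l * Riem eps f x i j c p).

Definition locally_symmetric k (eps : nat -> R) (f : nat -> R -> R) : Prop :=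
  forall (x : pt k) (a i j c l : 'I_(dim k)), nablaR eps f x a i j c l = 0.

Definition smooth (h : R -> R) : Prop := forall (n : nat) (u : R), ex_derive_n h n u.

(* The metric is built from k independent blocks (u_0, u_i, v_i, s_i) sharing the
   coordinate u_0, and in each block the inverse metric and the Christoffel symbols
   are explicit polynomials in u_0, s_i, f_i(u_i) and f_i'(u_i).  Carrying the
   computation through, R and nabla R are supported on the coordinates u_0, u_i, s_i
   of a single block, and the only independent components of nabla R are
     nabla_{u_i} R(u_0, u_i, u_0, u_i) = - f_i (2 + 4 f_i') / eps_i,
     nabla_{u_i} R(u_0, u_i, u_i, s_i) = f_i''.
   Hence nabla R = 0 iff f_i (1 + 2 f_i') = 0 and f_i'' = 0.  The second condition
   follows from the first: differentiating it shows that the continuous function f_i'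
   only takes the values 0 and -1/2, so it is constant by the intermediate value
   theorem. *)
From Pilot Require Import Defs.
From Stdlib Require Import Reals FunctionalExtensionality.
From Coquelicot Require Import Coquelicot.
From mathcomp Require Import all_boot all_algebra.
From mathcomp Require Import Rstruct.
From mathcomp Require Import zify ring lra.
Set Implicit Arguments. Unset Strict Implicit. Unset Printing Implicit Defensive.
Import GRing.Theory.
Local Open Scope ring_scope.

Lemma continuous_two_valued_constant (h : R -> R) (a b : R) :
  continuity h -> (forall u, h u = a \/ h u = b) -> forall u, h u = h 0.
Proof.
move=> h_cont h_ab u.
move: (Rmin_l (h u) (h 0)) (Rmin_r (h u) (h 0)) (Rmax_l (h u) (h 0)) (Rmax_r (h u) (h 0)).
move=> /RleP m1 /RleP m2 /RleP m3 /RleP m4.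
pose mid := (h u + h 0) / 2.
have mid_between : Rle (Rmin (h u) (h 0)) mid /\ Rle mid (Rmax (h u) (h 0)).
  by split; apply/RleP; rewrite /mid; lra.
have [y [_ h_mid]] := IVT_gen h u 0 mid h_cont mid_between.
move: h_mid; rewrite /mid => h_mid.
by case: (h_ab u) => ?; case: (h_ab 0) => ?; case: (h_ab y) => ?; lra.
Qed.

Lemma Derive_zero_or_half (g : R -> R) :
  (forall u, ex_derive g u) -> (forall u, ex_derive (Derive g) u) ->
  (forall u, g u = 0 \/ Derive g u = - (1 / 2)) ->
  forall u, Derive g u = 0 \/ Derive g u = - (1 / 2).
Proof.
move=> dg d2g g_cases u.
have g_eq0 t : g t * (1 + 2 * Derive g t) = 0.
  case: (g_cases t) => ->; first by rewrite mul0r.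
  have -> : 1 + 2 * - (1 / 2) = 0 :> R by lra.
  by rewrite mulr0.
have ex_rhs : ex_derive (fun t => 1 + 2 * Derive g t) u.
  by apply: ex_derive_plus; [exact: ex_derive_const | apply: ex_derive_scal].
have Drhs : Derive (fun t => 1 + 2 * Derive g t) u = 2 * Derive (Derive g) u.
  rewrite Derive_plus; [|exact: ex_derive_const | exact: ex_derive_scal].
  by rewrite Derive_const Derive_scal Rplus_0_l.
have D_eq0 : Derive g u * (1 + 2 * Derive g u) + g u * (2 * Derive (Derive g) u) = 0.
  have Dprod : Derive (fun t => g t * (1 + 2 * Derive g t)) u =
    Derive g u * (1 + 2 * Derive g u) + g u * Derive (fun t => 1 + 2 * Derive g t) u :=
    Derive_mult _ _ _ (dg u) ex_rhs.
  rewrite -Drhs -Dprod (Derive_ext _ (fun _ => 0) _ g_eq0).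
  exact: Derive_const.
case: (g_cases u) => [g0 | ]; last by right.
move: D_eq0; rewrite g0 mul0r addr0 => /eqP; rewrite mulf_eq0 => /orP [/eqP -> | /eqP ?].
  by left.
by right; lra.
Qed.

Lemma Derive2_eq0_of_zero_or_half (g : R -> R) :
  smooth g -> (forall u, g u = 0 \/ Derive g u = - (1 / 2)) ->
  forall u, Derive (Derive g) u = 0.
Proof.
move=> g_smooth g_cases u.
have dg u' : ex_derive g u' := g_smooth 1%N u'.
have d2g u' : ex_derive (Derive g) u' := g_smooth 2%N u'.
have Dg_cont : continuity (Derive g).
  by move=> t; apply/continuity_pt_filterlim; exact: ex_derive_continuous.
have Dg_const := continuous_two_valued_constant Dg_cont (Derive_zero_or_half dg d2g g_cases).
by rewrite (Derive_ext _ _ _ Dg_const) Derive_const.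
Qed.

Lemma mulmx1_invmx (T : comUnitRingType) n (A B : 'M[T]_n) :
  A *m B = 1%:M -> invmx A = B.
Proof.
move=> AB1; have [A_unit _] := mulmx1_unit AB1.
by rewrite -[invmx A]mulmx1 -AB1 mulKmx.
Qed.

Section LocallySymmetric.
Variables (k : nat) (eps : nat -> R) (f : nat -> R -> R).
Hypothesis eps_sign : forall i, (1 <= i <= k)%N -> eps i = 1 \/ eps i = -1.
Hypothesis f_smooth : forall i, (1 <= i <= k)%N -> smooth (f i).

Notation D := (Defs.dim k).
Notation P := (pt k).

Definition fcst (c : R) : P -> R := fun _ => c.
Arguments fcst c%_ring_scope.
Bind Scope ring_scope with R.
Definition fcoord (n : nat) : P -> R := fun y => Defs.coord y n.
Definition fval (i : nat) : P -> R := fun y => f i (Defs.coord y i).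
Definition fder (i : nat) : P -> R := fun y => Derive (f i) (Defs.coord y i).
Definition fder2 (i : nat) : P -> R := fun y => Derive (Derive (f i)) (Defs.coord y i).
Definition fadd (h1 h2 : P -> R) : P -> R := fun y => h1 y + h2 y.
Definition fmul (h1 h2 : P -> R) : P -> R := fun y => h1 y * h2 y.

Definition pdn (a : nat) (h : P -> R) (x : P) := pd (inord a) h x.
Definition ex_pdn (a : nat) (h : P -> R) (x : P) :=
  ex_derive (fun t => h (fun j => if j == inord a then t else x j)) (x (inord a)).

Lemma update_same (a : nat) (x : P) :
  (fun j => if j == inord a then x (inord a) else x j) = x.
Proof. apply: functional_extensionality => j; by case: eqP => [->|]. Qed.

Lemma comp_coord_update (g : R -> R) (n a : nat) (x : P) : (n < D)%N -> (a < D)%N ->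
  (fun t => g (Defs.coord (fun j => if j == inord a then t else x j) n)) =
  (fun t => if n == a then g t else g (Defs.coord x n)).
Proof.
move=> Hn Ha; apply: functional_extensionality => t; rewrite /Defs.coord /=.
have -> : (inord n == inord a :> 'I_D) = (n == a).
  by apply/eqP/eqP => [/(congr1 (@nat_of_ord _))|->//]; rewrite !inordK.
by case: eqP.
Qed.

Lemma pdn_comp_coord (g : R -> R) a n x : (n < D)%N -> (a < D)%N ->
  pdn a (fun y => g (Defs.coord y n)) x = if n == a then Derive g (Defs.coord x n) else 0.
Proof.
move=> Hn Ha; rewrite /pdn /pd comp_coord_update //.
by case: eqP => [->|_]; [| exact: Derive_const].
Qed.

Lemma ex_pdn_comp_coord (g : R -> R) a n x : (n < D)%N -> (a < D)%N ->
  ex_derive g (Defs.coord x n) -> ex_pdn a (fun y => g (Defs.coord y n)) x.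
Proof.
move=> Hn Ha dg; rewrite /ex_pdn comp_coord_update //.
by case: eqP => [E|_]; [rewrite -E; exact: dg | exact: ex_derive_const].
Qed.

Lemma pdn_cst a c x : pdn a (fcst c) x = 0.
Proof. exact: Derive_const. Qed.

Lemma ex_pdn_cst a c x : ex_pdn a (fcst c) x.
Proof. exact: ex_derive_const. Qed.

Lemma pdn_coord a n x : (n < D)%N -> (a < D)%N ->
  pdn a (fcoord n) x = if n == a then 1 else 0.
Proof. by move=> Hn Ha; rewrite (pdn_comp_coord id) // Derive_id. Qed.

Lemma ex_pdn_coord a n x : (n < D)%N -> (a < D)%N -> ex_pdn a (fcoord n) x.
Proof. by move=> Hn Ha; exact: (@ex_pdn_comp_coord id a n x Hn Ha (ex_derive_id _)). Qed.

Lemma pdn_fval a i x : (i < D)%N -> (a < D)%N ->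
  pdn a (fval i) x = if i == a then fder i x else 0.
Proof. exact: pdn_comp_coord. Qed.

Lemma ex_pdn_fval a i x : (1 <= i <= k)%N -> (a < D)%N -> ex_pdn a (fval i) x.
Proof.
move=> Hi Ha; apply: ex_pdn_comp_coord => //; last exact: (f_smooth Hi 1).
by rewrite /Defs.dim; lia.
Qed.

Lemma pdn_fder a i x : (i < D)%N -> (a < D)%N ->
  pdn a (fder i) x = if i == a then fder2 i x else 0.
Proof. exact: pdn_comp_coord. Qed.

Lemma ex_pdn_fder a i x : (1 <= i <= k)%N -> (a < D)%N -> ex_pdn a (fder i) x.
Proof.
move=> Hi Ha; apply: ex_pdn_comp_coord => //; last exact: (f_smooth Hi 2).
by rewrite /Defs.dim; lia.
Qed.

Lemma pdn_add a h1 h2 x : ex_pdn a h1 x -> ex_pdn a h2 x ->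
  pdn a (fadd h1 h2) x = pdn a h1 x + pdn a h2 x.
Proof. exact: Derive_plus. Qed.

Lemma ex_pdn_add a h1 h2 x : ex_pdn a h1 x -> ex_pdn a h2 x -> ex_pdn a (fadd h1 h2) x.
Proof. exact: ex_derive_plus. Qed.

Lemma pdn_mul a h1 h2 x : ex_pdn a h1 x -> ex_pdn a h2 x ->
  pdn a (fmul h1 h2) x = pdn a h1 x * h2 x + h1 x * pdn a h2 x.
Proof. by move=> H1 H2; rewrite /pdn /pd /fmul (Derive_mult _ _ _ H1 H2) update_same. Qed.

Lemma ex_pdn_mul a h1 h2 x : ex_pdn a h1 x -> ex_pdn a h2 x -> ex_pdn a (fmul h1 h2) x.
Proof. exact: ex_derive_mult. Qed.

Lemma eps_neq0 i : (1 <= i <= k)%N -> eps i != 0.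
Proof. by move=> /eps_sign [->|->]; rewrite ?oppr_eq0 oner_neq0. Qed.

Lemma exists_sidx_diag (p q : nat) :
  [exists i : 'I_k.+1, (1 <= i)%N && (p == sidx k i) && (q == sidx k i)] =
  ((2 * k + 2 <= p <= 3 * k + 1)%N && (p == q)).
Proof.
apply/existsP/idP.
  move=> [i /andP[/andP[H1 /eqP->] /eqP->]]; rewrite /sidx eqxx; have := ltn_ord i; lia.
move=> /andP[H /eqP <-]; exists (inord (p - (2 * k + 1))); rewrite /sidx inordK; lia.
Qed.

Inductive cidx := IU of nat | IV of nat | IS of nat.

Definition nat_of_cidx (e : cidx) : nat :=
  match e with IU a => a | IV a => (k + 1 + a)%N | IS b => (2 * k + 1 + b)%N end.
Definition cidx_valid (e : cidx) : bool :=
  match e with IU a => (a <= k)%N | IV a => (a <= k)%N | IS b => (1 <= b <= k)%N end.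
Definition cidx_of_nat (n : nat) : cidx :=
  if (n <= k)%N then IU n
  else if (n <= 2 * k + 1)%N then IV (n - (k + 1)) else IS (n - (2 * k + 1)).
Definition cidx_eqb (e1 e2 : cidx) : bool :=
  match e1, e2 with
  | IU a, IU b => a == b | IV a, IV b => a == b | IS a, IS b => a == b | _, _ => false
  end.

Lemma nat_of_cidx_lt e : cidx_valid e -> (nat_of_cidx e < D)%N.
Proof. case: e => a /=; rewrite /Defs.dim; lia. Qed.
Lemma cidx_of_nat_valid n : (n < D)%N -> cidx_valid (cidx_of_nat n).
Proof. rewrite /cidx_of_nat /Defs.dim => H; case: ifP => H1 /=; [|case: ifP => H2 /=]; lia. Qed.
Lemma cidx_of_natK n : (n < D)%N -> nat_of_cidx (cidx_of_nat n) = n.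
Proof. rewrite /cidx_of_nat /Defs.dim => H; case: ifP => H1 /=; [|case: ifP => H2 /=]; lia. Qed.
Lemma nat_of_cidxK e : cidx_valid e -> cidx_of_nat (nat_of_cidx e) = e.
Proof.
case: e => a /= Ha; rewrite /cidx_of_nat.
- by rewrite Ha.
- have -> : (k + 1 + a <= k)%N = false by lia.
  have -> : (k + 1 + a <= 2 * k + 1)%N = true by lia.
  congr IV; lia.
- have -> : (2 * k + 1 + a <= k)%N = false by lia.
  have -> : (2 * k + 1 + a <= 2 * k + 1)%N = false by lia.
  congr IS; lia.
Qed.
Lemma eq_nat_of_cidx e1 e2 : cidx_valid e1 -> cidx_valid e2 ->
  (nat_of_cidx e1 == nat_of_cidx e2) = cidx_eqb e1 e2.
Proof. case: e1 => a; case: e2 => b /= Ha Hb; apply/idP/idP; lia. Qed.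

Definition fcoordI (e : cidx) : P -> R := fcoord (nat_of_cidx e).

Lemma pdnI_coord a e x : cidx_valid a -> cidx_valid e ->
  pdn (nat_of_cidx a) (fcoordI e) x = if cidx_eqb e a then 1 else 0.
Proof. by move=> Va Ve; rewrite pdn_coord ?nat_of_cidx_lt // eq_nat_of_cidx. Qed.
Lemma ex_pdnI_coord a e x :
  cidx_valid a -> cidx_valid e -> ex_pdn (nat_of_cidx a) (fcoordI e) x.
Proof. by move=> Va Ve; apply: ex_pdn_coord; apply: nat_of_cidx_lt. Qed.
Lemma pdnI_fval a b x : cidx_valid a -> (1 <= b <= k)%N ->
  pdn (nat_of_cidx a) (fval b) x = if cidx_eqb (IU b) a then fder b x else 0.
Proof.
move=> Va Hb; rewrite pdn_fval ?nat_of_cidx_lt //; last by rewrite /Defs.dim; lia.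
by rewrite -[X in X == _]/(nat_of_cidx (IU b)) eq_nat_of_cidx //=; lia.
Qed.
Lemma ex_pdnI_fval a b x :
  cidx_valid a -> (1 <= b <= k)%N -> ex_pdn (nat_of_cidx a) (fval b) x.
Proof. by move=> Va Hb; apply: ex_pdn_fval => //; apply: nat_of_cidx_lt. Qed.
Lemma pdnI_fder a b x : cidx_valid a -> (1 <= b <= k)%N ->
  pdn (nat_of_cidx a) (fder b) x = if cidx_eqb (IU b) a then fder2 b x else 0.
Proof.
move=> Va Hb; rewrite pdn_fder ?nat_of_cidx_lt //; last by rewrite /Defs.dim; lia.
by rewrite -[X in X == _]/(nat_of_cidx (IU b)) eq_nat_of_cidx //=; lia.
Qed.
Lemma ex_pdnI_fder a b x :
  cidx_valid a -> (1 <= b <= k)%N -> ex_pdn (nat_of_cidx a) (fder b) x.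
Proof. by move=> Va Hb; apply: ex_pdn_fder => //; apply: nat_of_cidx_lt. Qed.

Definition gcrossI b := fmul (fmul (fcst 2) (fval b)) (fcoordI (IS b)).
Definition gdiagI a := fmul (fcst (-2)) (fmul (fcoordI (IU 0)) (fcoordI (IS a))).

Definition metricI (p q : cidx) : P -> R :=
  match p, q with
  | IU a, IU b => if a == 0%N then (if b == 0%N then fcst 0 else gcrossI b)
                  else if b == 0%N then gcrossI a else if a == b then gdiagI a else fcst 0
  | IU a, IV b => if a == b then fcst 1 else fcst 0
  | IV a, IU b => if a == b then fcst 1 else fcst 0
  | IS a, IS b => if a == b then fcst (eps a) else fcst 0
  | _, _ => fcst 0
  end.

Ltac unfold_funI := unfold gcrossI, gdiagI, fcoordI, fmul, fadd, fcst, fcoord, fval, fder,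
  fder2, nat_of_cidx; cbv beta iota.

Ltac case_ifs :=
  repeat (let H := fresh "H" in case: ifP => H; rewrite ?H; try (exfalso; lia)).

(* Identifies nat indices that the hypotheses force to be equal, possibly up to the
   offsets k + 1 and 2k + 1 introduced by [nat_of_cidx]. *)
Ltac subst_index_eqs :=
  repeat match goal with
  | a : nat, b : nat |- _ =>
      assert_fails (constr_eq a k); assert_fails (constr_eq b k);
      first [ (have Eq_ab : a = b by lia); subst a
            | (have Eq_ab : a = (k + 1 + b)%N by lia); subst a
            | (have Eq_ab : a = (2 * k + 1 + b)%N by lia); subst a ]
  end.

Lemma gnat_metricI y p q : cidx_valid p -> cidx_valid q ->
  gnat eps f y (nat_of_cidx p) (nat_of_cidx q) = metricI p q y.
Proof.
move=> Vp Vq; rewrite /gnat exists_sidx_diag /uidx /vidx /sidx.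
case: p Vp => a /= Va; case: q Vq => b /= Vb; case_ifs; unfold_funI; subst_index_eqs;
  rewrite ?addKn; ring.
Qed.

Definition sU (H : cidx -> R) := \sum_(a < k.+1) H (IU a).
Definition sV (H : cidx -> R) := \sum_(a < k.+1) H (IV a).
Definition sS (H : cidx -> R) := \sum_(b < k) H (IS b.+1).
Definition sumI (H : cidx -> R) := sU H + sV H + sS H.

Lemma sum_dim_blocks (G : nat -> R) :
  \sum_(l < D) G l = sumI (fun e => G (nat_of_cidx e)).
Proof.
have -> : \sum_(l < D) G l = \sum_(l < k.+1 + (k.+1 + k)) G l.
  by have -> : D = (k.+1 + (k.+1 + k))%N by rewrite /Defs.dim; lia.
rewrite big_split_ord /= big_split_ord /= /sumI /sU /sV /sS addrA.
congr (_ + _ + _); apply: eq_bigr => i _ /=; congr (G _); lia.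
Qed.

Lemma eq_sumI (H1 H2 : cidx -> R) :
  (forall e, cidx_valid e -> H1 e = H2 e) -> sumI H1 = sumI H2.
Proof.
move=> E; rewrite /sumI /sU /sV /sS; congr (_ + _ + _); apply: eq_bigr => i _; apply: E => /=;
  have := ltn_ord i; lia.
Qed.

Lemma sum_cidx_of_nat (H : cidx -> R) : \sum_(l < D) H (cidx_of_nat l) = sumI H.
Proof.
rewrite (sum_dim_blocks (fun l => H (cidx_of_nat l))); apply: eq_sumI => e Ve.
by rewrite nat_of_cidxK.
Qed.

Lemma sum_ord_single n c (F : nat -> R) : (c < n)%N ->
  (forall a, (a < n)%N -> a != c -> F a = 0) -> \sum_(a < n) F a = F c.
Proof.
move=> Hc F0; rewrite (bigD1 (Ordinal Hc)) //= big1 ?addr0 // => i Hi.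
by apply: F0 => //; apply: contra Hi => /eqP Ei; apply/eqP; apply: val_inj.
Qed.

Lemma sU_single H c : (c <= k)%N ->
  (forall a, (a <= k)%N -> a != c -> H (IU a) = 0) -> sU H = H (IU c).
Proof. exact: (@sum_ord_single k.+1 c (fun a => H (IU a))). Qed.
Lemma sU_zero H : (forall a, (a <= k)%N -> H (IU a) = 0) -> sU H = 0.
Proof. by move=> H0; rewrite /sU big1 // => i _; apply: H0; have := ltn_ord i; lia. Qed.
Lemma sV_single H c : (c <= k)%N ->
  (forall a, (a <= k)%N -> a != c -> H (IV a) = 0) -> sV H = H (IV c).
Proof. exact: (@sum_ord_single k.+1 c (fun a => H (IV a))). Qed.
Lemma sV_zero H : (forall a, (a <= k)%N -> H (IV a) = 0) -> sV H = 0.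
Proof. by move=> H0; rewrite /sV big1 // => i _; apply: H0; have := ltn_ord i; lia. Qed.
Lemma sS_zero H : (forall b, (1 <= b <= k)%N -> H (IS b) = 0) -> sS H = 0.
Proof. by move=> H0; rewrite /sS big1 // => i _; apply: H0; have := ltn_ord i; lia. Qed.
Lemma sS_single H c : (forall b, (1 <= b <= k)%N -> b != c -> H (IS b) = 0) ->
  sS H = if (1 <= c <= k)%N then H (IS c) else 0.
Proof.
move=> H0; case: ifP => Hc; last by apply: sS_zero => b Hb; apply: H0 => //; apply/eqP => Eb; lia.
rewrite /sS (@sum_ord_single k c.-1 (fun b => H (IS b.+1))); first by rewrite prednK //; lia.
  lia.
by move=> b Hb Hne; apply: H0; [lia | apply/eqP => Eb; lia].
Qed.

Lemma sumI_zero H : (forall e, H e = 0) -> sumI H = 0.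
Proof. by move=> H0; rewrite /sumI /sU /sV /sS !big1 ?addr0. Qed.
Lemma sumI_sub (H1 H2 : cidx -> R) : sumI (fun e => H1 e - H2 e) = sumI H1 - sumI H2.
Proof. rewrite /sumI /sU /sV /sS !sumrB; ring. Qed.
Lemma sumI_add (H1 H2 : cidx -> R) : sumI (fun e => H1 e + H2 e) = sumI H1 + sumI H2.
Proof. rewrite /sumI /sU /sV /sS !big_split /=; ring. Qed.

(* Curvature components are computed block by block: [block_of i j] is the block b
   the pair (i, j) belongs to, and [role b e] is 0 for u_0, 1 for u_b, 2 for s_b and
   3 for any other coordinate, on which R and nabla R vanish. *)
Definition block_num (e : cidx) : nat := match e with IU a => a | IV a => a | IS a => a end.
Definition block_of (i j : cidx) : nat :=
  if cidx_eqb i (IU 0) then block_num j else block_num i.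
Definition role (b : nat) (e : cidx) : nat :=
  match e with
  | IU a => if a == 0%N then 0%N else if a == b then 1%N else 3%N
  | IS a => if a == b then 2%N else 3%N
  | IV _ => 3%N
  end.
Definition RiemB (li lj lc ll b : nat) : P -> R :=
  let f2_eps := fmul (fcst (eps b)^-1) (fmul (fval b) (fval b)) in
  let one_df := fadd (fcst 1) (fder b) in
  match li, lj, lc, ll with
  | 0, 1, 0, 1 => fmul (fcst (-1)) f2_eps
  | 0, 1, 1, 0 => f2_eps
  | 1, 0, 0, 1 => f2_eps
  | 1, 0, 1, 0 => fmul (fcst (-1)) f2_eps
  | 0, 1, 1, 2 => one_df
  | 0, 1, 2, 1 => fmul (fcst (-1)) one_df
  | 1, 0, 1, 2 => fmul (fcst (-1)) one_df
  | 1, 0, 2, 1 => one_df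
  | 1, 2, 0, 1 => one_df
  | 1, 2, 1, 0 => fmul (fcst (-1)) one_df
  | 2, 1, 0, 1 => fmul (fcst (-1)) one_df
  | 2, 1, 1, 0 => one_df
  | _, _, _, _ => fcst 0
  end%N.
Definition RiemC (i j c l : cidx) : P -> R :=
  let b := block_of i j in RiemB (role b i) (role b j) (role b c) (role b l) b.

Definition nablaB (li lj lc ll b : nat) : P -> R :=
  let f_df := fmul (fcst (- (eps b)^-1))
                   (fmul (fval b) (fadd (fcst 2) (fmul (fcst 4) (fder b)))) in
  let d2f := fder2 b in
  match li, lj, lc, ll with
  | 0, 1, 0, 1 => f_df
  | 0, 1, 1, 0 => fmul (fcst (-1)) f_df
  | 1, 0, 0, 1 => fmul (fcst (-1)) f_df
  | 1, 0, 1, 0 => f_df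
  | 0, 1, 1, 2 => d2f
  | 0, 1, 2, 1 => fmul (fcst (-1)) d2f
  | 1, 0, 1, 2 => fmul (fcst (-1)) d2f
  | 1, 0, 2, 1 => d2f
  | 1, 2, 0, 1 => d2f
  | 1, 2, 1, 0 => fmul (fcst (-1)) d2f
  | 2, 1, 0, 1 => fmul (fcst (-1)) d2f
  | 2, 1, 1, 0 => d2f
  | _, _, _, _ => fcst 0
  end%N.
Definition nablaC (a i j c l : cidx) : P -> R :=
  match a with
  | IU b =>
    if b == 0%N then fcst 0 else nablaB (role b i) (role b j) (role b c) (role b l) b
  | _ => fcst 0
  end.

Ltac prune := try match goal with
  | Hc : (?x == ?x) = false |- _ => by rewrite eqxx in Hc
  | Hc : is_true (?x != ?x) |- _ => by rewrite eqxx in Hc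
  end.
Ltac case_roles_with post :=
  unfold block_of, block_num, role; cbn [cidx_eqb RiemB nablaB]; post;
  repeat (match goal with |- context [if ?c then _ else _] =>
    lazymatch c with context [if _ then _ else _] => fail | _ =>
      let H := fresh "H" in case H : c; [ try (move/eqP: H => H; subst) | idtac ] end end;
    unfold block_of, block_num, role; cbn [cidx_eqb RiemB nablaB]; rewrite ?eqxx; prune; post).
Ltac case_roles := case_roles_with idtac.
Ltac side_idx := first [done | lia | (rewrite /=; lia)].
Ltac solve_ex_pdn := match goal with
 | |- ex_pdn _ (fadd _ _) _ => apply: ex_pdn_add; solve_ex_pdn
 | |- ex_pdn _ (fmul _ _) _ => apply: ex_pdn_mul; solve_ex_pdn
 | |- ex_pdn _ (fcst _) _ => apply: ex_pdn_cst
 | |- ex_pdn _ (fcoordI _) _ => apply: ex_pdnI_coord; side_idx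
 | |- ex_pdn _ (fval _) _ => apply: ex_pdnI_fval; side_idx
 | |- ex_pdn _ (fder _) _ => apply: ex_pdnI_fder; side_idx
 end.
Ltac expand_pdn := repeat first
 [ rewrite pdn_cst
 | rewrite pdn_add; [|solve [solve_ex_pdn]|solve [solve_ex_pdn]]
 | rewrite pdn_mul; [|solve [solve_ex_pdn]|solve [solve_ex_pdn]]
 | rewrite pdnI_coord; [|side_idx|side_idx]
 | rewrite pdnI_fval; [|side_idx|side_idx]
 | rewrite pdnI_fder; [|side_idx|side_idx] ].
Ltac close_leafI :=
  unfold_funI;
  first [ ring | (field; repeat split; apply: eps_neq0; lia) | congruence | (exfalso; lia) ].

Lemma pd_pdn (a : 'I_D) h x : pd a h x = pdn (nat_of_cidx (cidx_of_nat a)) h x.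
Proof. by rewrite /pdn cidx_of_natK // inord_val. Qed.

Definition chrI (i j l : cidx) (x : P) : R :=
  (pdn (nat_of_cidx i) (metricI j l) x + pdn (nat_of_cidx j) (metricI i l) x
   - pdn (nat_of_cidx l) (metricI i j) x) / 2.

Ltac expand_with post :=
  repeat (progress (case_roles_with post; unfold gcrossI, gdiagI; expand_pdn)).
Ltac expand := expand_with idtac.

Lemma chrI_IV i j d x :
  cidx_valid i -> cidx_valid j -> (d <= k)%N -> chrI i j (IV d) x = 0.
Proof.
rewrite /chrI; case: i => a Va; case: j => b Vb Vd; rewrite /= in Va Vb; cbn [metricI].
all: expand; close_leafI.
Qed.

Ltac block_side :=
  first [ by move=> n n_le n_ne /=; rewrite ?chrI_IV //; case_roles; close_leafI
        | by move=> n n_le /=; rewrite ?chrI_IV //; case_roles; close_leafI ].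
Ltac eval_block_sums := repeat first
  [ rewrite sU_zero; [| block_side ]
  | rewrite sV_zero; [| block_side ]
  | rewrite sS_zero; [| block_side ]
  | match goal with c : nat |- _ => rewrite (sU_single (c := c)); [| by [] | block_side ] end
  | match goal with c : nat |- _ => rewrite (sV_single (c := c)); [| by [] | block_side ] end
  | match goal with c : nat |- _ => rewrite (sS_single (c := c)); [| block_side ] end ].

Definition inv_metricI (p q : cidx) (x : P) : R :=
  match p, q with
  | IU a, IV b => if a == b then 1 else 0
  | IV a, IU b => if a == b then 1 else 0
  | IV a, IV b => - metricI (IU a) (IU b) x
  | IS a, IS b => if a == b then (eps a)^-1 else 0
  | _, _ => 0
  end.

Lemma metricI_mul_inv x p q : cidx_valid p -> cidx_valid q ->
  sumI (fun e => metricI p e x * inv_metricI e q x) = if cidx_eqb p q then 1 else 0.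
Proof.
rewrite /sumI; case: p => a /= Va; case: q => b /= Vb; eval_block_sums.
all: by cbn [metricI inv_metricI cidx_eqb]; case_roles; close_leafI.
Qed.

Lemma gF_metricI (p q : 'I_D) y :
  gF eps f y p q = metricI (cidx_of_nat p) (cidx_of_nat q) y.
Proof. by rewrite /gF -gnat_metricI ?cidx_of_nat_valid // !cidx_of_natK. Qed.
Lemma gF_metricI_fun (p q : 'I_D) :
  (fun y => gF eps f y p q) = metricI (cidx_of_nat p) (cidx_of_nat q).
Proof. apply: functional_extensionality => y; exact: gF_metricI. Qed.

Lemma gmx_mul_inv_metricI x :
  gmx eps f x *m \matrix_(p, q) inv_metricI (cidx_of_nat p) (cidx_of_nat q) x = 1%:M.
Proof.
apply/matrixP => p q; rewrite !mxE.
under eq_bigr => j _ do rewrite !mxE gF_metricI.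
rewrite (sum_cidx_of_nat (fun e => metricI (cidx_of_nat p) e x * inv_metricI e (cidx_of_nat q) x)).
rewrite metricI_mul_inv ?cidx_of_nat_valid // -eq_nat_of_cidx ?cidx_of_nat_valid //.
rewrite !cidx_of_natK //.
have -> : (nat_of_ord p == nat_of_ord q) = (p == q) by [].
by case: (p == q).
Qed.

Lemma ginvE x (p q : 'I_D) :
  ginv eps f x p q = inv_metricI (cidx_of_nat p) (cidx_of_nat q) x.
Proof. by rewrite /ginv (mulmx1_invmx (gmx_mul_inv_metricI x)) mxE. Qed.

Lemma chr1_chrI x (i j l : 'I_D) :
  chr1 eps f x i j l = chrI (cidx_of_nat i) (cidx_of_nat j) (cidx_of_nat l) x.
Proof. by rewrite /chr1 /chrI !pd_pdn !gF_metricI_fun. Qed.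

(* Suffix I: a quantity of Defs rewritten over [cidx]; suffix C: its closed form. *)
Definition GamC (m i j : cidx) : P -> R :=
  match m with
  | IU _ => fcst 0
  | IV c =>
    match i, j with
    | IU a, IU b =>
      if c == 0%N then
        (if a == b then (if a == 0%N then fcst 0
                         else fmul (fcoordI (IS a)) (fadd (fmul (fcst 2) (fder a)) (fcst 1)))
         else fcst 0)
      else if a == 0%N then (if b == c then fmul (fcst (-1)) (fcoordI (IS c)) else fcst 0)
      else if b == 0%N then (if a == c then fmul (fcst (-1)) (fcoordI (IS c)) else fcst 0)
      else fcst 0
    | IU a, IS b =>
      if c == 0%N then (if a == b then fval a else fcst 0)
      else if a == 0%N then (if b == c then fval c else fcst 0)
      else if a == c then (if b == c then fmul (fcst (-1)) (fcoordI (IU 0)) else fcst 0)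
      else fcst 0
    | IS b, IU a =>
      if c == 0%N then (if a == b then fval a else fcst 0)
      else if a == 0%N then (if b == c then fval c else fcst 0)
      else if a == c then (if b == c then fmul (fcst (-1)) (fcoordI (IU 0)) else fcst 0)
      else fcst 0
    | _, _ => fcst 0
    end
  | IS c =>
    if c == 0%N then fcst 0 else
    match i, j with
    | IU a, IU b =>
      if a == 0%N then (if b == c then fmul (fcst (- (eps c)^-1)) (fval c) else fcst 0)
      else if b == 0%N then (if a == c then fmul (fcst (- (eps c)^-1)) (fval c) else fcst 0)
      else if a == c then (if b == c then fmul (fcst ((eps c)^-1)) (fcoordI (IU 0)) else fcst 0)
      else fcst 0
    | _, _ => fcst 0
    end
  end.

Definition GamI (m i j : cidx) (x : P) : R :=
  sumI (fun l => inv_metricI m l x * chrI i j l x).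

Lemma Gam_GamI x (m i j : 'I_D) :
  Gam eps f x m i j = GamI (cidx_of_nat m) (cidx_of_nat i) (cidx_of_nat j) x.
Proof.
rewrite /Gam /GamI -sum_cidx_of_nat; apply: eq_bigr => l _.
by rewrite ginvE chr1_chrI.
Qed.

Lemma GamI_closed m i j x :
  cidx_valid m -> cidx_valid i -> cidx_valid j -> GamI m i j x = GamC m i j x.
Proof.
rewrite /GamI /sumI; case: m => c Vc Vi Vj; rewrite /= in Vc; eval_block_sums; cbn [inv_metricI].
all: case: i Vi => a Va; case: j Vj => b Vb; rewrite /= in Va Vb; rewrite /chrI; cbn [metricI GamC].
all: expand; close_leafI.
Qed.

Lemma GamE x (m i j : 'I_D) :
  Gam eps f x m i j = GamC (cidx_of_nat m) (cidx_of_nat i) (cidx_of_nat j) x.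
Proof. by rewrite Gam_GamI GamI_closed ?cidx_of_nat_valid. Qed.
Lemma Gam_funE (m j c : 'I_D) :
  (fun y => Gam eps f y m j c) = GamC (cidx_of_nat m) (cidx_of_nat j) (cidx_of_nat c).
Proof. apply: functional_extensionality => y; exact: GamE. Qed.

Lemma GamC_IV m i b : GamC m i (IV b) = fcst 0.
Proof. case: m => c //=; case: i => a //=; by case: ifP. Qed.

Lemma block_of_le i j : cidx_valid i -> cidx_valid j -> (block_of i j <= k)%N.
Proof.
case: i => a; case: j => b; rewrite /block_of /block_num; cbn [cidx_eqb cidx_valid];
  try case: ifP => _; lia.
Qed.

Lemma GamC_IS_off_block i j b x :
  cidx_valid i -> cidx_valid j -> b != block_of i j -> GamC (IS b) i j x = 0.
Proof.
case: i => a Va; case: j => b' Vb; rewrite /= in Va Vb; cbn [GamC];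
  case_roles; move=> Hne; prune; close_leafI.
Qed.

Lemma sumI_GamC_mul a X x (Y : cidx -> R) :
  cidx_valid a -> cidx_valid X -> (forall b, Y (IV b) = 0) ->
  sumI (fun p => GamC p a X x * Y p) = GamC (IS (block_of a X)) a X x * Y (IS (block_of a X)).
Proof.
move=> Va VX HY; rewrite /sumI sU_zero; last by move=> b Hb; rewrite /= /fcst mul0r.
rewrite sV_zero; last by move=> b Hb; rewrite HY mulr0.
rewrite (sS_single (c := block_of a X)); last by move=> b Hb Hne; rewrite GamC_IS_off_block // mul0r.
rewrite !add0r; case: ifP => // H.
have -> : block_of a X = 0%N by have := block_of_le Va VX; lia.
by rewrite /= /fcst mul0r.
Qed.

Lemma sumI_GamC_GamC m i j c x : cidx_valid j -> cidx_valid c ->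
  sumI (fun p => GamC p j c x * GamC m i p x) =
  GamC (IS (block_of j c)) j c x * GamC m i (IS (block_of j c)) x.
Proof. by move=> Vj Vc; apply: sumI_GamC_mul => // b; rewrite GamC_IV. Qed.

Definition RiemI (i j c l : cidx) (x : P) : R :=
  sumI (fun m => metricI m l x *
    (pdn (nat_of_cidx i) (GamC m j c) x - pdn (nat_of_cidx j) (GamC m i c) x
     + sumI (fun p => GamC p j c x * GamC m i p x - GamC p i c x * GamC m j p x))).

Lemma Riem_RiemI x (i j c l : 'I_D) :
  Riem eps f x i j c l = RiemI (cidx_of_nat i) (cidx_of_nat j) (cidx_of_nat c) (cidx_of_nat l) x.
Proof.
rewrite /Riem /RiemI -sum_cidx_of_nat; apply: eq_bigr => m _.
rewrite gF_metricI !pd_pdn !Gam_funE; congr (_ * (_ + _)).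
rewrite -sum_cidx_of_nat; apply: eq_bigr => p _; by rewrite !GamE.
Qed.

Lemma sumI_metricI_lower (T : cidx -> R) l x : cidx_valid l -> (forall a, T (IU a) = 0) ->
  sumI (fun m => metricI m l x * T m) =
  match l with IU d => T (IV d) | IV _ => 0 | IS d => eps d * T (IS d) end.
Proof.
case: l => d Vd HT; rewrite /= in Vd; rewrite /sumI.
- rewrite sU_zero; last by move=> a _; rewrite HT mulr0.
  rewrite (sV_single (c := d)) //; last by move=> a _ Hne /=; rewrite (negbTE Hne) /fcst mul0r.
  rewrite sS_zero; last by move=> a _ /=; rewrite /fcst mul0r.
  by rewrite /= eqxx /fcst mul1r add0r addr0.
- rewrite sU_zero; last by move=> a _; rewrite HT mulr0.
  rewrite sV_zero; last by move=> a _ /=; rewrite /fcst mul0r.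
  rewrite sS_zero; last by move=> a _ /=; rewrite /fcst mul0r.
  by rewrite !addr0.
- rewrite sU_zero; last by move=> a _; rewrite HT mulr0.
  rewrite sV_zero; last by move=> a _ /=; rewrite /fcst mul0r.
  rewrite (sS_single (c := d)); last by move=> a _ Hne /=; rewrite (negbTE Hne) /fcst mul0r.
  by rewrite Vd /= eqxx /fcst !add0r.
Qed.

Lemma RiemI_closed i j c l x : cidx_valid i -> cidx_valid j -> cidx_valid c -> cidx_valid l ->
  RiemI i j c l x = RiemC i j c l x.
Proof.
move=> Vi Vj Vc Vl; rewrite /RiemI sumI_metricI_lower //; last first.
  move=> a; rewrite /= pdn_cst pdn_cst sumI_zero ?subrr ?addr0 // => e; by rewrite /fcst !mulr0 subrr.
case: l Vl => d Vd; rewrite /= in Vd; rewrite ?sumI_sub ?sumI_GamC_GamC //.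
all: case: i Vi => a Va; case: j Vj => b Vb; case: c Vc => e Ve; rewrite /= in Va Vb Ve.
all: rewrite /RiemC; cbn [GamC]; expand; close_leafI.
Qed.

Lemma RiemE x (i j c l : 'I_D) :
  Riem eps f x i j c l = RiemC (cidx_of_nat i) (cidx_of_nat j) (cidx_of_nat c) (cidx_of_nat l) x.
Proof. by rewrite Riem_RiemI RiemI_closed ?cidx_of_nat_valid. Qed.
Lemma Riem_funE (i j c l : 'I_D) :
  (fun y => Riem eps f y i j c l) =
  RiemC (cidx_of_nat i) (cidx_of_nat j) (cidx_of_nat c) (cidx_of_nat l).
Proof. apply: functional_extensionality => y; exact: RiemE. Qed.

Lemma RiemB_other1 lj lc ll b : RiemB 3 lj lc ll b = fcst 0. Proof. by []. Qed.
Lemma RiemB_other2 li lc ll b : RiemB li 3 lc ll b = fcst 0. Proof. by case: li => [|[|[|]]]. Qed.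
Lemma RiemB_other3 li lj ll b : RiemB li lj 3 ll b = fcst 0.
Proof. by case: li => [|[|[|]]]; case: lj => [|[|[|]]]. Qed.
Lemma RiemB_other4 li lj lc b : RiemB li lj lc 3 b = fcst 0.
Proof. by case: li => [|[|[|]]]; case: lj => [|[|[|]]]; case: lc => [|[|[|]]]. Qed.

Lemma RiemC_IV1 b j c l : RiemC (IV b) j c l = fcst 0. Proof. by rewrite /RiemC /= ?RiemB_other1. Qed.
Lemma RiemC_IV2 b i c l : RiemC i (IV b) c l = fcst 0. Proof. by rewrite /RiemC /= ?RiemB_other2. Qed.
Lemma RiemC_IV3 b i j l : RiemC i j (IV b) l = fcst 0. Proof. by rewrite /RiemC /= ?RiemB_other3. Qed.
Lemma RiemC_IV4 b i j c : RiemC i j c (IV b) = fcst 0. Proof. by rewrite /RiemC /= ?RiemB_other4. Qed.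

Definition nablaI (a i j c l : cidx) (x : P) : R :=
  pdn (nat_of_cidx a) (RiemC i j c l) x
  - sumI (fun p => GamC p a i x * RiemC p j c l x + GamC p a j x * RiemC i p c l x
                 + GamC p a c x * RiemC i j p l x + GamC p a l x * RiemC i j c p x).

Lemma nablaR_nablaI x (a i j c l : 'I_D) :
  nablaR eps f x a i j c l =
  nablaI (cidx_of_nat a) (cidx_of_nat i) (cidx_of_nat j) (cidx_of_nat c) (cidx_of_nat l) x.
Proof.
rewrite /nablaR /nablaI pd_pdn Riem_funE -sum_cidx_of_nat; congr (_ - _); apply: eq_bigr => p _.
by rewrite !GamE !RiemE.
Qed.

Lemma nablaI_contract a i j c l x :
  cidx_valid a -> cidx_valid i -> cidx_valid j -> cidx_valid c -> cidx_valid l ->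
  nablaI a i j c l x = pdn (nat_of_cidx a) (RiemC i j c l) x
   - (GamC (IS (block_of a i)) a i x * RiemC (IS (block_of a i)) j c l x
    + GamC (IS (block_of a j)) a j x * RiemC i (IS (block_of a j)) c l x
    + GamC (IS (block_of a c)) a c x * RiemC i j (IS (block_of a c)) l x
    + GamC (IS (block_of a l)) a l x * RiemC i j c (IS (block_of a l)) x).
Proof.
move=> Va Vi Vj Vc Vl; rewrite /nablaI !sumI_add !sumI_GamC_mul //.
all: by move=> b; rewrite ?RiemC_IV1 ?RiemC_IV2 ?RiemC_IV3 ?RiemC_IV4.
Qed.

Lemma fcst0E x : fcst 0 x = 0. Proof. by []. Qed.
Ltac zero_simp := rewrite ?fcst0E ?mul0r ?mulr0 ?add0r ?addr0 ?subr0 ?sub0r ?oppr0 ?pdn_cst.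

Lemma nablaB_other1 lj lc ll b : nablaB 3 lj lc ll b = fcst 0. Proof. by []. Qed.
Lemma nablaB_other2 li lc ll b : nablaB li 3 lc ll b = fcst 0. Proof. by case: li => [|[|[|]]]. Qed.
Lemma nablaB_other3 li lj ll b : nablaB li lj 3 ll b = fcst 0.
Proof. by case: li => [|[|[|]]]; case: lj => [|[|[|]]]. Qed.
Lemma nablaB_other4 li lj lc b : nablaB li lj lc 3 b = fcst 0.
Proof. by case: li => [|[|[|]]]; case: lj => [|[|[|]]]; case: lc => [|[|[|]]]. Qed.
Lemma nablaC_IV1 a b j c l : nablaC a (IV b) j c l = fcst 0.
Proof. case: a => a //=; case: ifP => // _; by rewrite ?nablaB_other1. Qed.
Lemma nablaC_IV2 a b i c l : nablaC a i (IV b) c l = fcst 0.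
Proof. case: a => a //=; case: ifP => // _; by rewrite ?nablaB_other2. Qed.
Lemma nablaC_IV3 a b i j l : nablaC a i j (IV b) l = fcst 0.
Proof. case: a => a //=; case: ifP => // _; by rewrite ?nablaB_other3. Qed.
Lemma nablaC_IV4 a b i j c : nablaC a i j c (IV b) = fcst 0.
Proof. case: a => a //=; case: ifP => // _; by rewrite ?nablaB_other4. Qed.

Ltac vanish_IV :=
  rewrite ?RiemC_IV1 ?RiemC_IV2 ?RiemC_IV3 ?RiemC_IV4 ?GamC_IV
    ?nablaC_IV1 ?nablaC_IV2 ?nablaC_IV3 ?nablaC_IV4 ?pdn_cst ?fcst0E; ring.

Lemma nablaI_closed a i j c l x :
  cidx_valid a -> cidx_valid i -> cidx_valid j -> cidx_valid c -> cidx_valid l ->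
  nablaI a i j c l x = nablaC a i j c l x.
Proof.
move=> Va Vi Vj Vc Vl; rewrite nablaI_contract //.
case: i Vi => a1 V1; [| vanish_IV |]; case: j Vj => a2 V2; try vanish_IV;
  case: c Vc => a3 V3; try vanish_IV; case: l Vl => a4 V4; try vanish_IV.
all: rewrite /= in V1 V2 V3 V4.
all: case: a Va => a0 V0; rewrite /= in V0.
all: unfold RiemC, nablaC; cbn [GamC]; expand_with zero_simp; close_leafI.
Qed.

Lemma nablaRE x (a i j c l : 'I_D) :
  nablaR eps f x a i j c l =
  nablaC (cidx_of_nat a) (cidx_of_nat i) (cidx_of_nat j) (cidx_of_nat c) (cidx_of_nat l) x.
Proof. by rewrite nablaR_nablaI nablaI_closed ?cidx_of_nat_valid. Qed.

Lemma nablaB_eq0 b x li lj lc ll : fval b x * (2 + 4 * fder b x) = 0 -> fder2 b x = 0 ->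
  nablaB li lj lc ll b x = 0.
Proof.
move=> H1 H2.
case: li => [|[|[|li]]]; case: lj => [|[|[|lj]]]; case: lc => [|[|[|lc]]]; case: ll => [|[|[|ll]]];
  rewrite /nablaB /fmul /fadd /fcst ?H1 ?H2 ?mulr0 //.
Qed.

Lemma nablaC_eq0 a i j c l x :
  (forall b u, (1 <= b <= k)%N -> f b u * (2 + 4 * Derive (f b) u) = 0) ->
  (forall b u, (1 <= b <= k)%N -> Derive (Derive (f b)) u = 0) ->
  cidx_valid a -> nablaC a i j c l x = 0.
Proof.
move=> H1 H2; case: a => b //= Vb; case: ifP => Hb; first by [].
have Hb' : (1 <= b <= k)%N by move/negbT: Hb; lia.
apply: nablaB_eq0; [exact: H1 | exact: H2].
Qed.

Lemma locally_symmetric_zero_or_half : locally_symmetric k eps f ->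
  forall i, (1 <= i <= k)%N -> forall u, f i u = 0 \/ Derive (f i) u = - (1 / 2).
Proof.
move=> LS i Hi u.
pose x : P := fun _ => u.
have cidx_u n : (n <= k)%N -> cidx_of_nat (inord n : 'I_D) = IU n.
  move=> Hn; rewrite inordK; last by rewrite /Defs.dim; lia.
  by rewrite /cidx_of_nat Hn.
(* nabla_{u_i} R(u_0, u_i, u_0, u_i) = - f_i (2 + 4 f_i') / eps_i *)
have := LS x (inord i) (inord 0) (inord i) (inord 0) (inord i).
rewrite nablaRE !cidx_u; try lia.
have Hi0 : (i == 0%N) = false by lia.
rewrite /nablaC Hi0 /role /= Hi0 eqxx /= /fmul /fadd /fcst /fval /fder.
change (Defs.coord x i) with u.
move/eqP; rewrite mulf_eq0 oppr_eq0 invr_eq0 (negbTE (eps_neq0 Hi)) /= mulf_eq0.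
case/orP => [/eqP -> | /eqP E]; first by left.
by right; lra.
Qed.

Lemma zero_or_half_locally_symmetric :
  (forall i, (1 <= i <= k)%N -> forall u, f i u = 0 \/ Derive (f i) u = - (1 / 2)) ->
  locally_symmetric k eps f.
Proof.
move=> f_cases x a i j c l; rewrite nablaRE; apply: nablaC_eq0; last exact: cidx_of_nat_valid.
  move=> b u Hb; case: (f_cases b Hb u) => ->; first by rewrite mul0r.
  have -> : 2 + 4 * (- (1 / 2)) = 0 :> R by lra.
  by rewrite mulr0.
by move=> b u Hb; apply: Derive2_eq0_of_zero_or_half; [exact: f_smooth | exact: f_cases].
Qed.

End LocallySymmetric.

Unset Implicit Arguments.

Theorem lemma2p1 (k : nat) (eps : nat -> R) (f : nat -> R -> R) :
  (1 <= k)%N ->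
  (forall i : nat, (1 <= i <= k)%N -> eps i = 1 \/ eps i = -1) ->
  (forall i : nat, (1 <= i <= k)%N -> smooth (f i)) ->
  (locally_symmetric k eps f <->
   (forall i : nat, (1 <= i <= k)%N ->
      forall u : R, f i u = 0 \/ Derive (f i) u = - (1 / 2))).
Proof.
move=> _ eps_sign f_smooth; split.
- exact: locally_symmetric_zero_or_half.
- exact: zero_or_half_locally_symmetric.
Qed.
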